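(* Let $\mathcal{I}_\nu$ be as in the context. Then: (a) If $\nu\in\left(-1,-\tfrac12\right]$, the function $x\mapsto \mathcal{I}_\nu'(x)$ is strictly log-concave on $(0,\infty)$. (b) If $\nu>-1$, the function $x\mapsto \mathcal{I}_\nu'(x)$ is strictly log-concave on $\left(0,\sqrt{2(\nu+3)}\right)$. (c) If $\nu>-\tfrac12$, there exists $x_\nu>\sqrt{2(\nu+3)}$ such that $x\mapsto\mathcal{I}_\nu'(x)$ is strictly log-concave on $(0,x_\nu)$ and strictly log-convex on $(x_\nu,\infty)$.
   Context: For $\nu>-1$ define $\mathcal{I}_\nu:\mathbb{R}\to[1,\infty)$ by $\mathcal{I}_\nu(x)=\sum_{n\ge0}\frac{(1/4)^n}{(\nu+1)_n\, n!}x^{2n}$, where $(a)_n=a(a+1)\cdots(a+n-1)$, $(a)_0=1$. Equivalently $\mathcal{I}_\nu(x)=2^\nu\Gamma(\nu+1)x^{-\nu}I_\nu(x)$ for $x>0$, where $I_\nu$ is the modified Bessel function of the first kind. Note $\mathcal{I}_\nu'(x)>0$ for $x>0$. *)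

From Stdlib Require Import Reals Arith ClassicalEpsilon.
Open Scope R_scope.

Fixpoint poch (a : R) (n : nat) : R :=
  match n with
  | O => 1
  | S k => poch a k * (a + INR k)
  end.

Definition Iterm (nu x : R) (n : nat) : R :=
  (/ 4) ^ n / (poch (nu + 1) n * INR (fact n)) * x ^ (2 * n).

(* I_nu(x) = sum_{n>=0} Iterm nu x n  (the series converges for all x
   when nu > -1; the value is chosen by classical description). *)
Definition Inu (nu x : R) : R :=
  epsilon (inhabits 0) (fun l => infinite_sum (Iterm nu x) l).

Definition strictly_log_concave_on (f : R -> R) (D : R -> Prop) : Prop :=
  (forall x, D x -> 0 < f x) /\
  (forall x y t, D x -> D y -> x <> y -> 0 < t < 1 ->
     t * ln (f x) + (1 - t) * ln (f y) < ln (f (t * x + (1 - t) * y))).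

Definition strictly_log_convex_on (f : R -> R) (D : R -> Prop) : Prop :=
  (forall x, D x -> 0 < f x) /\
  (forall x y t, D x -> D y -> x <> y -> 0 < t < 1 ->
     ln (f (t * x + (1 - t) * y)) < t * ln (f x) + (1 - t) * ln (f y)).

(* Since [I_nu' = f] with [f(x) = x v(x) / (2 (nu+1))] and [v = I_(nu+1)], and [v]
   solves [x v'' + (2 nu + 3) v' = x v], the second log-derivative of [f] is
   [(ln f)'' = E / (x v)^2] with [E = x^2 v^2 - (2 nu + 3) x v v' - x^2 v'^2 - v^2].
   The ODE gives [E' = (2 nu + 1) G] with [G = x v'^2 + (2 nu + 4) v v' - x v^2],
   and [G > 0] on [(0, oo)] follows from the Riccati-type bound
   [v' / v > x / (nu + 3/2 + sqrt (x^2 + (nu + 5/2)^2))], proved by a barrier argument.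
   As [E 0 = -1], [E] is negative for [nu <= -1/2]; for [nu > -1/2] it increases,
   is still negative at [sqrt (2 (nu + 3))] (by the same bound) and eventually
   positive (by the reverse bound with [c = a^2 + a], [a = nu + 3/2]); its unique
   zero is the point [x_nu] of part (c). *)

From Stdlib Require Import Reals Factorial Lra Psatz ClassicalEpsilon FunctionalExtensionality.
From Coquelicot Require Import Coquelicot.
Open Scope R_scope.

(* The coefficient of [y ^ n] in [I_m(x) = sum_n Icoef m n y ^ n], [y = x ^ 2]. *)
Definition Icoef (m : R) (n : nat) : R :=
  (/ 4) ^ n / (poch (m + 1) n * INR (fact n)).

Lemma poch_pos (a : R) (n : nat) : 0 < a -> 0 < poch a n.
Proof.
  intros Ha; induction n as [|n IH]; simpl; [lra|].
  pose proof (pos_INR n); apply Rmult_lt_0_compat; lra.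
Qed.

Lemma poch_succ (a : R) (n : nat) : poch a (S n) = a * poch (a + 1) n.
Proof.
  induction n as [|n IH]; [simpl; ring|].
  change (poch a (S (S n))) with (poch a (S n) * (a + INR (S n))).
  rewrite IH, S_INR; simpl; ring.
Qed.

Lemma Icoef_pos (m : R) (n : nat) : -1 < m -> 0 < Icoef m n.
Proof.
  intros Hm; unfold Icoef.
  pose proof (poch_pos (m + 1) n ltac:(lra)); pose proof (INR_fact_lt_0 n).
  apply Rdiv_lt_0_compat; [apply pow_lt; lra | apply Rmult_lt_0_compat; lra].
Qed.

Lemma Icoef_ratio (m : R) (n : nat) : -1 < m ->
  Icoef m (S n) / Icoef m n = / 4 * (/ (m + 1 + INR n) * / INR (S n)).
Proof.
  intros Hm; unfold Icoef; simpl poch.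
  pose proof (poch_pos (m + 1) n ltac:(lra)); pose proof (pos_INR n).
  pose proof (INR_fact_lt_0 n); assert (0 < (/ 4) ^ n) by (apply pow_lt; lra).
  change (fact (S n)) with (S n * fact n)%nat.
  rewrite mult_INR, S_INR; simpl pow; field; repeat split; lra.
Qed.

Lemma Icoef_radius (m : R) : -1 < m -> CV_radius (Icoef m) = p_infty.
Proof.
  intros Hm; apply CV_radius_infinite_DAlembert.
  - intros n; pose proof (Icoef_pos m n Hm); lra.
  - apply is_lim_seq_ext with (fun n => / 4 * (/ (m + 1 + INR n) * / INR (S n))).
    + intros n; pose proof (Icoef_pos m n Hm); pose proof (Icoef_pos m (S n) Hm).
      rewrite Rabs_right, Icoef_ratio by (try exact Hm; apply Rle_ge, Rlt_le, Rdiv_lt_0_compat; lra).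
      reflexivity.
    + replace (Finite 0) with (Rbar_mult (/ 4) (Rbar_mult 0 0)) by (simpl; f_equal; ring).
      apply is_lim_seq_scal_l, is_lim_seq_mult'.
      * replace (Finite 0) with (Rbar_inv p_infty) by reflexivity.
        apply is_lim_seq_inv; [|discriminate].
        eapply is_lim_seq_plus; [apply is_lim_seq_const | apply is_lim_seq_INR | reflexivity].
      * replace (Finite 0) with (Rbar_inv p_infty) by reflexivity.
        apply is_lim_seq_inv; [|discriminate].
        apply (is_lim_seq_incr_1 INR), is_lim_seq_INR.
Qed.

Lemma Icoef_summable (m y : R) : -1 < m -> ex_pseries (Icoef m) y.
Proof. intros Hm; apply CV_radius_inside; rewrite Icoef_radius by exact Hm; exact I. Qed.

Lemma Iterm_sum (m x : R) : -1 < m ->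
  infinite_sum (Iterm m x) (PSeries (Icoef m) (x ^ 2)).
Proof.
  intros Hm; apply is_series_Reals.
  apply is_series_ext with (fun n => Icoef m n * (x ^ 2) ^ n).
  - intros n; unfold Iterm, Icoef; rewrite pow_mult; reflexivity.
  - apply is_pseries_R, PSeries_correct, Icoef_summable, Hm.
Qed.

Lemma Inu_pseries (m x : R) : -1 < m -> Inu m x = PSeries (Icoef m) (x ^ 2).
Proof.
  intros Hm; unfold Inu.
  apply (uniqueness_sum (Iterm m x)); [|apply Iterm_sum, Hm].
  apply epsilon_spec; eexists; apply Iterm_sum, Hm.
Qed.

Lemma Inu_at_0 (m : R) : -1 < m -> Inu m 0 = 1.
Proof.
  intros Hm; rewrite Inu_pseries by exact Hm.
  replace (0 ^ 2) with 0 by ring; rewrite PSeries_0; unfold Icoef; simpl; field.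
Qed.

Lemma Inu_ge_1 (m x : R) : -1 < m -> 1 <= Inu m x.
Proof.
  intros Hm; rewrite Inu_pseries by exact Hm.
  replace 1 with (sum_f_R0 (Iterm m x) 0) by (unfold Iterm; simpl; field).
  apply sum_incr; [apply Iterm_sum, Hm|].
  intros n; unfold Iterm; pose proof (Icoef_pos m n Hm) as P; unfold Icoef in P.
  rewrite pow_mult; apply Rmult_le_pos; [lra | apply pow_le; nra].
Qed.

Lemma Icoef_derive (m : R) (n : nat) : -1 < m ->
  INR (S n) * Icoef m (S n) = / (4 * (m + 1)) * Icoef (m + 1) n.
Proof.
  intros Hm; unfold Icoef; rewrite poch_succ.
  change (fact (S n)) with (S n * fact n)%nat; rewrite mult_INR, S_INR.
  pose proof (poch_pos (m + 1 + 1) n ltac:(lra)); pose proof (pos_INR n); pose proof (INR_fact_lt_0 n).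
  simpl pow; field; repeat split; lra.
Qed.

Lemma Inu_derivative (m x : R) : -1 < m ->
  derivable_pt_lim (Inu m) x (x * Inu (m + 1) x / (2 * (m + 1))).
Proof.
  intros Hm.
  replace (Inu m) with (comp (PSeries (Icoef m)) (fun t => t ^ 2))
    by (apply functional_extensionality; intros t; symmetry; apply Inu_pseries, Hm).
  replace (x * Inu (m + 1) x / (2 * (m + 1)))
    with (PSeries (PS_derive (Icoef m)) (x ^ 2) * (INR 2 * x ^ (2 - 1))).
  - apply derivable_pt_lim_comp; [apply derivable_pt_lim_pow|].
    apply is_derive_Reals, is_derive_PSeries; rewrite Icoef_radius by exact Hm; exact I.
  - rewrite (Inu_pseries (m + 1)) by lra.
    rewrite (PSeries_ext _ (PS_scal (/ (4 * (m + 1))) (Icoef (m + 1)))).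
    + rewrite PSeries_scal; simpl; field; lra.
    + intros n; unfold PS_derive, PS_scal; rewrite Icoef_derive by exact Hm; reflexivity.
Qed.

Lemma Icoef_contiguous (m : R) (n : nat) : -1 < m ->
  Icoef m (S n) = Icoef (m + 1) (S n) + / (4 * (m + 1) * (m + 2)) * Icoef (m + 2) n.
Proof.
  intros Hm; unfold Icoef.
  replace (m + 2 + 1) with (m + 1 + 1 + 1) by ring.
  rewrite (poch_succ (m + 1)), (poch_succ (m + 1 + 1)).
  change (fact (S n)) with (S n * fact n)%nat; rewrite mult_INR.
  assert (Hp : poch (m + 1 + 1) (S n) = (m + 1 + 1) * poch (m + 1 + 1 + 1) n) by apply poch_succ.
  simpl poch in Hp.
  pose proof (poch_pos (m + 1 + 1 + 1) n ltac:(lra)); pose proof (pos_INR n); pose proof (INR_fact_lt_0 n).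
  assert (Hq : poch (m + 1 + 1) n = (m + 1 + 1) * poch (m + 1 + 1 + 1) n / (m + 1 + 1 + INR n))
    by (rewrite <- Hp; field; lra).
  rewrite Hq, S_INR; simpl pow; field; repeat split; lra.
Qed.

Lemma Inu_contiguous (m x : R) : -1 < m ->
  Inu m x = Inu (m + 1) x + x ^ 2 * Inu (m + 2) x / (4 * (m + 1) * (m + 2)).
Proof.
  intros Hm; rewrite !Inu_pseries by lra.
  set (c := / (4 * (m + 1) * (m + 2))).
  transitivity (PSeries (PS_plus (Icoef (m + 1)) (PS_scal c (PS_incr_1 (Icoef (m + 2))))) (x ^ 2)).
  - apply PSeries_ext; intros [|n]; unfold PS_plus, PS_scal, PS_incr_1;
      change plus with Rplus; change scal with Rmult; simpl.
    + change zero with 0; unfold Icoef; simpl; ring.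
    + rewrite Icoef_contiguous by exact Hm; reflexivity.
  - rewrite PSeries_plus, PSeries_scal, PSeries_incr_1.
    + unfold c; field; lra.
    + apply Icoef_summable; lra.
    + apply ex_pseries_scal; [apply Rmult_comm|].
      apply ex_pseries_incr_1, Icoef_summable; lra.
Qed.

Lemma derive_eq (f : R -> R) (x l l' : R) :
  derivable_pt_lim f x l -> l = l' -> derivable_pt_lim f x l'.
Proof. now intros H <-. Qed.

Lemma derive_square (f : R -> R) (x l : R) :
  derivable_pt_lim f x l -> derivable_pt_lim (fun t => f t ^ 2) x (2 * f x * l).
Proof.
  intros Hf; replace (fun t => f t ^ 2) with (fun t => f t * f t)
    by (apply functional_extensionality; intros t; ring).
  eapply derive_eq; [apply (derivable_pt_lim_mult f f); exact Hf | ring].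
Qed.

Ltac derive :=
  repeat first [ eassumption | apply derivable_pt_lim_const | apply derivable_pt_lim_id
               | apply derivable_pt_lim_minus | apply derivable_pt_lim_plus
               | apply derive_square | apply derivable_pt_lim_mult ].

Lemma derive_ln (f : R -> R) (x l : R) :
  derivable_pt_lim f x l -> 0 < f x -> derivable_pt_lim (fun t => ln (f t)) x (l / f x).
Proof.
  intros Hf Hpos.
  eapply derive_eq; [apply (derivable_pt_lim_comp f ln); [exact Hf | apply derivable_pt_lim_ln, Hpos]|].
  field; lra.
Qed.

Lemma derive_sqrt_shift (c x : R) : 0 < c ->
  derivable_pt_lim (fun t => sqrt (t ^ 2 + c)) x (x / sqrt (x ^ 2 + c)).
Proof.
  intros Hc; assert (P : 0 < x ^ 2 + c) by nra; pose proof (sqrt_lt_R0 _ P).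
  eapply derive_eq.
  - apply (derivable_pt_lim_comp (fun t => t ^ 2 + c) sqrt); [derive | apply derivable_pt_lim_sqrt, P].
  - cbv beta; field; lra.
Qed.

Definition is_interval (D : R -> Prop) : Prop :=
  forall x y z, D x -> D y -> x <= z <= y -> D z.

Lemma decreasing_of_negative_derivative (D : R -> Prop) (F F' : R -> R) :
  is_interval D -> (forall x, D x -> derivable_pt_lim F x (F' x)) ->
  (forall x, D x -> F' x < 0) -> forall x y, D x -> D y -> x < y -> F y < F x.
Proof.
  intros HD HF Hneg x y Dx Dy Hxy.
  destruct (MVT_cor2 F F' x y Hxy) as [c [E Hc]].
  { intros c Hc; apply HF, (HD x y); assumption. }
  assert (Dc : D c) by (apply (HD x y); [assumption | assumption | lra]).
  pose proof (Hneg c Dc); nra.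
Qed.

(* A strictly decreasing derivative makes the function strictly concave:
   by the mean value theorem on [x, m] and [m, y], the chord lies below. *)
Lemma strictly_concave_of_decreasing_derivative (D : R -> Prop) (L L' : R -> R) :
  is_interval D -> (forall x, D x -> derivable_pt_lim L x (L' x)) ->
  (forall x y, D x -> D y -> x < y -> L' y < L' x) ->
  forall x y t, D x -> D y -> x <> y -> 0 < t < 1 ->
    t * L x + (1 - t) * L y < L (t * x + (1 - t) * y).
Proof.
  intros HD HL Hdec.
  assert (Ordered : forall x y t, D x -> D y -> x < y -> 0 < t < 1 ->
            t * L x + (1 - t) * L y < L (t * x + (1 - t) * y)).
  { intros x y t Dx Dy Hxy Ht; set (m := t * x + (1 - t) * y).
    assert (Hm : x < m < y) by (unfold m; nra).
    assert (HLD : forall c, x <= c <= y -> derivable_pt_lim L c (L' c))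
      by (intros c Hc; apply HL, (HD x y); assumption).
    destruct (MVT_cor2 L L' x m ltac:(lra)) as [c1 [E1 Hc1]]; [intros; apply HLD; lra|].
    destruct (MVT_cor2 L L' m y ltac:(lra)) as [c2 [E2 Hc2]]; [intros; apply HLD; lra|].
    assert (Hlt : L' c2 < L' c1) by (apply Hdec; try (apply (HD x y); [assumption | assumption | lra]); lra).
    replace (m - x) with ((1 - t) * (y - x)) in E1 by (unfold m; ring).
    replace (y - m) with (t * (y - x)) in E2 by (unfold m; ring).
    assert (0 < t * (1 - t) * (y - x)) by (apply Rmult_lt_0_compat; nra).
    nra. }
  intros x y t Dx Dy Hne Ht.
  destruct (Rtotal_order x y) as [Hxy | [Hxy | Hxy]]; [auto | contradiction |].
  replace (t * x + (1 - t) * y) with ((1 - t) * y + (1 - (1 - t)) * x) by ring.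
  pose proof (Ordered y x (1 - t) Dy Dx Hxy ltac:(lra)); lra.
Qed.

Lemma smaller_to_the_left (g : R -> R) (t l : R) :
  derivable_pt_lim g t l -> 0 < l -> 0 < t -> exists s, 0 <= s < t /\ g s < g t.
Proof.
  intros Hg Hl Ht.
  destruct (Hg (l / 2) ltac:(lra)) as [delta Hdelta]; pose proof (cond_pos delta).
  set (h := Rmin (delta / 2) (t / 2)).
  assert (Hh : 0 < h <= t / 2) by (split; [apply Rmin_pos; lra | apply Rmin_r]).
  assert (Hhd : h <= delta / 2) by apply Rmin_l.
  specialize (Hdelta (- h) ltac:(lra) ltac:(rewrite Rabs_left; lra)).
  apply Rabs_def2 in Hdelta; destruct Hdelta as [_ Hdelta].
  exists (t - h); split; [lra|].
  replace (t + - h) with (t - h) in Hdelta by ring.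
  set (q := (g (t - h) - g t) / - h) in Hdelta.
  assert (g (t - h) - g t = - h * q) by (unfold q; field; lra).
  nra.
Qed.

(* A minimum point of [g] on [[0, x]]
   with [g <= 0] would have a positive derivative, contradicting minimality. *)
Lemma positive_by_barrier (g g' : R -> R) :
  (forall x, derivable_pt_lim g x (g' x)) -> g 0 = 0 ->
  (forall x, 0 < x -> g x <= 0 -> 0 < g' x) -> forall x, 0 < x -> 0 < g x.
Proof.
  intros Hg g0 Hbarrier x Hx.
  destruct (Rlt_or_le 0 (g x)) as [|Hle]; [assumption | exfalso].
  destruct (continuity_ab_min g 0 x) as [m [Hmin Hm]]; [lra | |].
  { intros c _; apply derivable_continuous_pt; exists (g' c); apply Hg. }
  assert (Hpt : exists t, 0 < t <= x /\ g t <= 0 /\ forall c, 0 <= c <= x -> g t <= g c).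
  { destruct (Req_dec m 0) as [->|Hm0].
    - exists x; pose proof (Hmin x ltac:(lra)); repeat split; try lra.
      intros c Hc; pose proof (Hmin c Hc); lra.
    - exists m; pose proof (Hmin x ltac:(lra)); repeat split; try lra; assumption. }
  destruct Hpt as [t [Ht [Hgt Htmin]]].
  destruct (smaller_to_the_left g t (g' t)) as [s [Hs Hgs]]; [apply Hg | apply Hbarrier; lra | lra |].
  pose proof (Htmin s ltac:(lra)); lra.
Qed.

Section LogConcavityOfDerivative.

Variable nu : R.
Hypothesis Hnu : -1 < nu.

Definition v (x : R) : R := Inu (nu + 1) x.
Definition dv (x : R) : R := x * Inu (nu + 2) x / (2 * (nu + 2)).
Definition ddv (x : R) : R :=
  (Inu (nu + 2) x + x * (x * Inu (nu + 3) x / (2 * (nu + 3)))) / (2 * (nu + 2)).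

Lemma v_derivative (x : R) : derivable_pt_lim v x (dv x).
Proof.
  unfold v, dv; replace (nu + 2) with (nu + 1 + 1) by ring.
  apply Inu_derivative; lra.
Qed.

Lemma dv_derivative (x : R) : derivable_pt_lim dv x (ddv x).
Proof.
  pose proof (Inu_derivative (nu + 2) x ltac:(lra)) as D.
  replace (nu + 2 + 1) with (nu + 3) in D by ring.
  unfold dv, ddv; eapply derive_eq; [derive|].
  cbv beta; field; lra.
Qed.

Lemma bessel_ode (x : R) : x * ddv x + (2 * nu + 3) * dv x - x * v x = 0.
Proof.
  pose proof (Inu_contiguous (nu + 1) x ltac:(lra)) as C.
  replace (nu + 1 + 1) with (nu + 2) in C by ring.
  replace (nu + 1 + 2) with (nu + 3) in C by ring.
  unfold v, dv, ddv; rewrite C; field; lra.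
Qed.

Lemma v_ge_1 (x : R) : 1 <= v x.
Proof. apply Inu_ge_1; lra. Qed.

Lemma v_at_0 : v 0 = 1.
Proof. apply Inu_at_0; lra. Qed.

Lemma dv_pos (x : R) : 0 < x -> 0 < dv x.
Proof.
  intros Hx; unfold dv; pose proof (Inu_ge_1 (nu + 2) x ltac:(lra)).
  apply Rdiv_lt_0_compat; [apply Rmult_lt_0_compat|]; lra.
Qed.

Definition f (x : R) : R := x * v x / (2 * (nu + 1)).
Definition Lf (x : R) : R := (v x + x * dv x) / (x * v x).

Lemma f_pos (x : R) : 0 < x -> 0 < f x.
Proof.
  intros Hx; unfold f; pose proof (v_ge_1 x).
  apply Rdiv_lt_0_compat; [apply Rmult_lt_0_compat|]; lra.
Qed.

Lemma ln_f_derivative (x : R) : 0 < x -> derivable_pt_lim (fun t => ln (f t)) x (Lf x).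
Proof.
  intros Hx; pose proof (v_derivative x); pose proof (v_ge_1 x).
  eapply derive_eq; [apply derive_ln; [unfold f; derive | apply f_pos, Hx]|].
  cbv beta; unfold f, Lf; field; lra.
Qed.

(* The numerator of [(ln f)''], whose sign decides log-concavity of [f]. *)
Definition E (x : R) : R :=
  x ^ 2 * v x ^ 2 - (2 * nu + 3) * x * v x * dv x - x ^ 2 * dv x ^ 2 - v x ^ 2.

(* [E' = (2 nu + 1) G], and [G > 0] on [(0, oo)] (see [G_pos]). *)
Definition G (x : R) : R := x * dv x ^ 2 + (2 * nu + 4) * v x * dv x - x * v x ^ 2.

Lemma Lf_derivative (x : R) : 0 < x -> derivable_pt_lim Lf x (E x / (x * v x) ^ 2).
Proof.
  intros Hx; pose proof (v_derivative x); pose proof (dv_derivative x); pose proof (v_ge_1 x).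
  assert (Hode : x * ddv x = x * v x - (2 * nu + 3) * dv x) by (pose proof (bessel_ode x); lra).
  unfold Lf; eapply derive_eq.
  { apply (derivable_pt_lim_div (fun t => v t + t * dv t) (fun t => t * v t)); [derive | derive | nra]. }
  cbv beta; unfold E.
  replace (ddv x) with ((x * v x - (2 * nu + 3) * dv x) / x) by (rewrite <- Hode; field; lra).
  unfold Rsqr; field; lra.
Qed.

Lemma E_derivative (x : R) : derivable_pt_lim E x ((2 * nu + 1) * G x).
Proof.
  pose proof (v_derivative x); pose proof (dv_derivative x).
  eapply derive_eq; [unfold E; derive|].
  transitivity ((2 * nu + 1) * G x
    - ((2 * nu + 3) * v x + 2 * x * dv x) * (x * ddv x + (2 * nu + 3) * dv x - x * v x)).
  - cbv beta; unfold G; ring.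
  - rewrite bessel_ode; ring.
Qed.

Lemma E_at_0 : E 0 = -1.
Proof. unfold E; rewrite v_at_0; ring. Qed.

(* Sign of [E] from a lower (resp. upper) bound [q] on the ratio [x v' / v]:
   [E / v^2 = x^2 - 1 - (2 nu + 3) r - r^2] decreases in [r = x v' / v >= 0]. *)
Lemma E_upper_bound (q x : R) :
  0 <= q -> q * v x <= x * dv x -> E x <= v x ^ 2 * (x ^ 2 - 1 - (2 * nu + 3) * q - q ^ 2).
Proof.
  intros Hq Hr; pose proof (v_ge_1 x); unfold E.
  assert (0 <= (x * dv x - q * v x) * (x * dv x + q * v x)) by (apply Rmult_le_pos; nra).
  assert (0 <= (2 * nu + 3) * v x * (x * dv x - q * v x)) by (apply Rmult_le_pos; nra).
  nra.
Qed.

Lemma E_lower_bound (q x : R) :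
  0 <= x * dv x -> x * dv x <= q * v x -> v x ^ 2 * (x ^ 2 - 1 - (2 * nu + 3) * q - q ^ 2) <= E x.
Proof.
  intros Hr0 Hr; pose proof (v_ge_1 x); unfold E.
  assert (0 <= (q * v x - x * dv x) * (q * v x + x * dv x)) by (apply Rmult_le_pos; nra).
  assert (0 <= (2 * nu + 3) * v x * (q * v x - x * dv x)) by (apply Rmult_le_pos; nra).
  nra.
Qed.

(* Riccati-type comparison functions: [Psi c >= 0] says
   [v' / v >= x / (nu + 3/2 + sqrt (x^2 + c))]. *)
Definition Psi (c x : R) : R := (nu + 3 / 2 + sqrt (x ^ 2 + c)) * dv x - x * v x.
Definition dPsi (c x : R) : R :=
  x / sqrt (x ^ 2 + c) * dv x + (nu + 3 / 2 + sqrt (x ^ 2 + c)) * ddv x - (v x + x * dv x).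

Lemma Psi_derivative (c x : R) : 0 < c -> derivable_pt_lim (Psi c) x (dPsi c x).
Proof.
  intros Hc; pose proof (v_derivative x); pose proof (dv_derivative x).
  pose proof (derive_sqrt_shift c x Hc).
  eapply derive_eq; [unfold Psi; derive | cbv beta; unfold dPsi; ring].
Qed.

Lemma Psi_at_0 (c : R) : Psi c 0 = 0.
Proof. unfold Psi, dv; unfold Rdiv; ring. Qed.

Lemma Psi_identity (c x : R) : 0 < c -> 0 < x ->
  x * sqrt (x ^ 2 + c) * dPsi c x =
    ((c - (nu + 3 / 2) ^ 2 - (nu + 3 / 2)) * sqrt (x ^ 2 + c) - c) * dv x
    - sqrt (x ^ 2 + c) * (nu + 3 / 2 + sqrt (x ^ 2 + c) - 1) * Psi c x.
Proof.
  intros Hc Hx; set (s := sqrt (x ^ 2 + c)); set (a := nu + 3 / 2).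
  assert (Hs : s * s = x ^ 2 + c) by (apply sqrt_sqrt; nra).
  assert (0 < s) by (apply sqrt_lt_R0; nra).
  unfold dPsi, Psi; fold s a.
  transitivity (((c - a ^ 2 - a) * s - c) * dv x - s * (a + s - 1) * ((a + s) * dv x - x * v x)
    + (s - 1) * (s * s - x ^ 2 - c) * dv x
    + (a + s) * s * (x * ddv x + (2 * nu + 3) * dv x - x * v x)).
  - unfold a; field; lra.
  - rewrite bessel_ode, Hs; ring.
Qed.

(* [Psi] with [c = (nu + 5/2)^2] is positive: where it is [<= 0] it increases. *)
Lemma Psi_pos : forall x, 0 < x -> 0 < Psi ((nu + 5 / 2) ^ 2) x.
Proof.
  assert (Hc : 0 < (nu + 5 / 2) ^ 2) by nra.
  apply (positive_by_barrier _ (dPsi ((nu + 5 / 2) ^ 2))).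
  - intros x; apply Psi_derivative, Hc.
  - apply Psi_at_0.
  - intros x Hx Hle; pose proof (Psi_identity _ x Hc Hx) as Id.
    set (s := sqrt (x ^ 2 + (nu + 5 / 2) ^ 2)) in *.
    assert (Hs : s * s = x ^ 2 + (nu + 5 / 2) ^ 2) by (apply sqrt_sqrt; nra).
    assert (0 < s) by (apply sqrt_lt_R0; nra).
    assert (Hsb : nu + 5 / 2 < s) by nra.
    pose proof (dv_pos x Hx).
    replace ((nu + 5 / 2) ^ 2 - (nu + 3 / 2) ^ 2 - (nu + 3 / 2)) with (nu + 5 / 2) in Id by field.
    assert (0 < (nu + 5 / 2) * (s - (nu + 5 / 2)) * dv x)
      by (apply Rmult_lt_0_compat; [apply Rmult_lt_0_compat|]; lra).
    assert (0 <= - (s * (nu + 3 / 2 + s - 1) * Psi ((nu + 5 / 2) ^ 2) x))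
      by (assert (0 < s * (nu + 3 / 2 + s - 1)) by nra; nra).
    assert (0 < x * s * dPsi ((nu + 5 / 2) ^ 2) x) by (rewrite Id; nra).
    apply (Rmult_lt_reg_l (x * s)); [nra | lra].
Qed.

Lemma Psi_neg (x : R) : -1 / 2 < nu -> 0 < x ->
  Psi ((nu + 3 / 2) ^ 2 + (nu + 3 / 2)) x < 0.
Proof.
  intros Hnu' Hx0; set (c := (nu + 3 / 2) ^ 2 + (nu + 3 / 2)).
  assert (Hc : 0 < c) by (unfold c; nra).
  enough (0 < - Psi c x) by lra.
  revert x Hx0; apply (positive_by_barrier (fun t => - Psi c t) (fun t => - dPsi c t)).
  - intros x; apply (derivable_pt_lim_opp (Psi c)), Psi_derivative, Hc.
  - rewrite Psi_at_0; ring.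
  - intros x Hx Hle; pose proof (Psi_identity _ x Hc Hx) as Id.
    set (s := sqrt (x ^ 2 + c)) in *.
    assert (0 < s) by (apply sqrt_lt_R0; nra).
    pose proof (dv_pos x Hx).
    replace (c - (nu + 3 / 2) ^ 2 - (nu + 3 / 2)) with 0 in Id by (unfold c; ring).
    assert (0 <= s * (nu + 3 / 2 + s - 1) * Psi c x)
      by (assert (0 < s * (nu + 3 / 2 + s - 1)) by nra; nra).
    assert (x * s * dPsi c x < 0) by (rewrite Id; nra).
    apply (Rmult_lt_reg_l (x * s)); [nra | lra].
Qed.

(* [G > 0]: writing [P = (a + s) v'] and [u = x v] with [s = sqrt (x^2 + (a+1)^2)],
   [P (x G) = (P - u) (x v')^2 + u (s - a - 1) v'^2 + u P (P - u)] and [P > u] by [Psi_pos]. *)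
Lemma G_pos (x : R) : 0 < x -> 0 < G x.
Proof.
  intros Hx; pose proof (Psi_pos x Hx) as Hpsi; unfold Psi in Hpsi.
  set (s := sqrt (x ^ 2 + (nu + 5 / 2) ^ 2)) in *.
  assert (Hs : s * s = x ^ 2 + (nu + 5 / 2) ^ 2) by (apply sqrt_sqrt; nra).
  assert (0 < s) by (apply sqrt_lt_R0; nra).
  assert (Hsb : nu + 5 / 2 < s) by nra.
  pose proof (dv_pos x Hx); pose proof (v_ge_1 x).
  set (P := (nu + 3 / 2 + s) * dv x) in *; set (u := x * v x) in *.
  assert (Id : P * (x * G x) = (P - u) * (x * dv x) ^ 2 + u * (s - (nu + 5 / 2)) * dv x ^ 2
     + u * P * (P - u) + u * dv x ^ 2 * (x ^ 2 + (nu + 5 / 2) ^ 2 - s * s))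
    by (unfold P, u, G; field).
  rewrite Hs, Rminus_diag, Rmult_0_r, Rplus_0_r in Id.
  assert (0 < u) by (unfold u; nra).
  assert (0 < (P - u) * (x * dv x) ^ 2) by (apply Rmult_lt_0_compat; [lra | apply pow_lt; nra]).
  assert (0 < u * (s - (nu + 5 / 2)) * dv x ^ 2)
    by (apply Rmult_lt_0_compat; [apply Rmult_lt_0_compat | apply pow_lt]; lra).
  assert (0 < u * P * (P - u)) by (apply Rmult_lt_0_compat; [apply Rmult_lt_0_compat|]; lra).
  assert (0 < P * (x * G x)) by lra.
  assert (0 < x * G x) by (apply (Rmult_lt_reg_l P); lra).
  nra.
Qed.

(* For [nu <= -1/2], [E] is nonincreasing from [E 0 = -1], hence negative. *)
Lemma E_neg_small_nu (x : R) : nu <= -1 / 2 -> 0 < x -> E x < 0.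
Proof.
  intros Hnu' Hx.
  destruct (MVT_cor2 E (fun t => (2 * nu + 1) * G t) 0 x Hx) as [c [Hmvt Hc]];
    [intros; apply E_derivative|].
  pose proof (G_pos c ltac:(lra)); rewrite E_at_0 in Hmvt.
  assert ((2 * nu + 1) * G c <= 0) by nra.
  nra.
Qed.

Lemma E_increasing (x y : R) : -1 / 2 < nu -> 0 < x -> x < y -> E x < E y.
Proof.
  intros Hnu' Hx Hxy.
  destruct (MVT_cor2 E (fun t => (2 * nu + 1) * G t) x y Hxy) as [c [Hmvt Hc]];
    [intros; apply E_derivative|].
  pose proof (G_pos c ltac:(lra)).
  assert (0 < (2 * nu + 1) * G c * (y - x))
    by (apply Rmult_lt_0_compat; [apply Rmult_lt_0_compat|]; lra).
  lra.
Qed.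

Lemma E_continuous : continuity E.
Proof. intros x; apply derivable_continuous_pt; eexists; apply E_derivative. Qed.

(* At [x0 = sqrt (2 (nu + 3))], [Psi_pos] gives [x0 v' / v >= q := (2 nu + 6) / (2 nu + 5)],
   and then [E x0 <= - v^2 / (2 nu + 5)^2]. *)
Lemma E_neg_at_threshold : E (sqrt (2 * (nu + 3))) < 0.
Proof.
  set (x0 := sqrt (2 * (nu + 3))).
  assert (Hx0 : 0 < x0) by (apply sqrt_lt_R0; lra).
  assert (Hx2 : x0 ^ 2 = 2 * nu + 6) by (unfold x0; rewrite pow2_sqrt; lra).
  pose proof (Psi_pos x0 Hx0) as Hpsi; unfold Psi in Hpsi.
  replace (sqrt (x0 ^ 2 + (nu + 5 / 2) ^ 2)) with (nu + 7 / 2) in Hpsi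
    by (rewrite Hx2, <- (sqrt_pow2 (nu + 7 / 2)) by lra; f_equal; field).
  set (q := (2 * nu + 6) / (2 * nu + 5)).
  assert (Hratio : q * v x0 <= x0 * dv x0).
  { assert (x0 * v x0 < (2 * nu + 5) * dv x0)
      by (replace (2 * nu + 5) with (nu + 3 / 2 + (nu + 7 / 2)) by field; lra).
    assert ((2 * nu + 6) * v x0 < (2 * nu + 5) * (x0 * dv x0)) by (rewrite <- Hx2; nra).
    apply Rmult_le_reg_l with (2 * nu + 5); [lra|].
    replace ((2 * nu + 5) * (q * v x0)) with ((2 * nu + 6) * v x0) by (unfold q; field; lra).
    lra. }
  pose proof (E_upper_bound q x0 ltac:(unfold q; apply Rlt_le, Rdiv_lt_0_compat; lra) Hratio) as HE.
  replace (x0 ^ 2 - 1 - (2 * nu + 3) * q - q ^ 2) with (- / (2 * nu + 5) ^ 2) in HE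
    by (rewrite Hx2; unfold q; field; lra).
  pose proof (v_ge_1 x0).
  assert (0 < v x0 ^ 2 * / (2 * nu + 5) ^ 2)
    by (apply Rmult_lt_0_compat; [nra | apply Rinv_0_lt_compat; nra]).
  lra.
Qed.

(* For [nu > -1/2], i.e. [a = nu + 3/2 > 1], take [s = a (2 a + 1) / (a - 1)] and
   [X = sqrt (s^2 - a^2 - a)].  [Psi_neg] bounds [X v' / v] by [q = X^2 / (a + s)],
   and [E X >= v^2 a^2 (a + s - 1) / (a + s)^2 > 0]. *)
Lemma E_pos_somewhere : -1 / 2 < nu -> exists X, 0 < X /\ 0 < E X.
Proof.
  intros Hnu'; set (a := nu + 3 / 2); assert (Ha : 1 < a) by (unfold a; lra).
  set (s := a * (2 * a + 1) / (a - 1)).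
  assert (Hs : s * (a - 1) = a * (2 * a + 1)) by (unfold s; field; lra).
  assert (Hsa : a + 1 < s) by nra.
  set (X := sqrt (s ^ 2 - (a ^ 2 + a))).
  assert (HX2 : X ^ 2 = s ^ 2 - (a ^ 2 + a)) by (unfold X; rewrite pow2_sqrt; nra).
  assert (HX : 0 < X) by (apply sqrt_lt_R0; nra).
  exists X; split; [exact HX|].
  pose proof (Psi_neg X Hnu' HX) as Hpsi; unfold Psi in Hpsi; fold a in Hpsi.
  replace (sqrt (X ^ 2 + (a ^ 2 + a))) with s in Hpsi
    by (rewrite HX2, Rplus_comm, Rplus_minus, sqrt_pow2; lra).
  set (q := X ^ 2 / (a + s)).
  pose proof (dv_pos X HX).
  assert (Hratio : X * dv X <= q * v X).
  { apply Rmult_le_reg_l with (a + s); [lra|].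
    replace ((a + s) * (q * v X)) with (X * (X * v X)) by (unfold q; field; lra).
    nra. }
  pose proof (E_lower_bound q X ltac:(nra) Hratio) as HE.
  replace (X ^ 2 - 1 - (2 * nu + 3) * q - q ^ 2) with (a ^ 2 * (a + s - 1) / (a + s) ^ 2) in HE.
  - pose proof (v_ge_1 X).
    assert (0 < a ^ 2 * (a + s - 1) / (a + s) ^ 2)
      by (apply Rdiv_lt_0_compat; [apply Rmult_lt_0_compat|]; nra).
    assert (0 < v X ^ 2 * (a ^ 2 * (a + s - 1) / (a + s) ^ 2)) by (apply Rmult_lt_0_compat; nra).
    lra.
  - replace (2 * nu + 3) with (2 * a) by (unfold a; field).
    unfold q; rewrite HX2; field_simplify_eq; [|lra].
    assert (Hz : (s * (a - 1) - a * (2 * a + 1)) * (s + a) = 0) by (rewrite Hs; ring).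
    lra.
Qed.

Variable dI : R -> R.
Hypothesis dI_derivative : forall x, 0 < x -> derivable_pt_lim (Inu nu) x (dI x).

Lemma dI_closed_form (x : R) : 0 < x -> dI x = f x.
Proof.
  intros Hx; apply (uniqueness_limite (Inu nu) x); [apply dI_derivative, Hx|].
  apply Inu_derivative, Hnu.
Qed.

(* On a subinterval of [(0, oo)], [E < 0] gives strict log-concavity of [dI]:
   [(ln dI)' = Lf] has derivative [E / (x v)^2 < 0]. *)
Lemma dI_log_concave (D : R -> Prop) :
  is_interval D -> (forall x, D x -> 0 < x) -> (forall x, D x -> E x < 0) ->
  strictly_log_concave_on dI D.
Proof.
  intros HD Hpos Hneg; split.
  - intros x Dx; rewrite dI_closed_form by auto; apply f_pos; auto.
  - intros x y t Dx Dy Hne Ht; pose proof (Hpos x Dx); pose proof (Hpos y Dy).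
    assert (0 < t * x + (1 - t) * y) by nra.
    rewrite !dI_closed_form by assumption.
    apply (strictly_concave_of_decreasing_derivative D (fun z => ln (f z)) Lf); auto.
    + intros z Dz; apply ln_f_derivative; auto.
    + apply (decreasing_of_negative_derivative D Lf (fun z => E z / (z * v z) ^ 2)); auto.
      * intros z Dz; apply Lf_derivative; auto.
      * intros z Dz; pose proof (Hpos z Dz); pose proof (v_ge_1 z); pose proof (Hneg z Dz).
        apply Rdiv_neg_pos; [assumption | apply pow_lt; nra].
Qed.

(* Symmetrically, [E > 0] gives strict log-convexity (concavity of [- ln dI]). *)
Lemma dI_log_convex (D : R -> Prop) :
  is_interval D -> (forall x, D x -> 0 < x) -> (forall x, D x -> 0 < E x) ->
  strictly_log_convex_on dI D.
Proof.
  intros HD Hpos HposE; split.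
  - intros x Dx; rewrite dI_closed_form by auto; apply f_pos; auto.
  - intros x y t Dx Dy Hne Ht; pose proof (Hpos x Dx); pose proof (Hpos y Dy).
    assert (0 < t * x + (1 - t) * y) by nra.
    rewrite !dI_closed_form by assumption.
    enough (t * - ln (f x) + (1 - t) * - ln (f y) < - ln (f (t * x + (1 - t) * y))) by lra.
    apply (strictly_concave_of_decreasing_derivative D (fun z => - ln (f z)) (fun z => - Lf z)); auto.
    + intros z Dz; apply (derivable_pt_lim_opp (fun z => ln (f z))), ln_f_derivative; auto.
    + apply (decreasing_of_negative_derivative D (fun z => - Lf z)
               (fun z => - (E z / (z * v z) ^ 2))); auto.
      * intros z Dz; apply (derivable_pt_lim_opp Lf), Lf_derivative; auto.
      * intros z Dz; pose proof (Hpos z Dz); pose proof (v_ge_1 z); pose proof (HposE z Dz).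
        enough (0 < E z / (z * v z) ^ 2) by lra.
        apply Rdiv_lt_0_compat; [assumption | apply pow_lt; nra].
Qed.

End LogConcavityOfDerivative.

Theorem theorem1 :
  forall (nu : R) (dI : R -> R),
    -1 < nu ->
    (forall x, 0 < x -> derivable_pt_lim (Inu nu) x (dI x)) ->
    (* (a) *)
    (nu <= -1/2 -> strictly_log_concave_on dI (fun x => 0 < x)) /\
    (* (b) *)
    strictly_log_concave_on dI (fun x => 0 < x < sqrt (2 * (nu + 3))) /\
    (* (c) *)
    (-1/2 < nu ->
      exists xnu, sqrt (2 * (nu + 3)) < xnu /\
        strictly_log_concave_on dI (fun x => 0 < x < xnu) /\
        strictly_log_convex_on dI (fun x => xnu < x)).
Proof.
  intros nu dI Hnu HdI.
  set (x0 := sqrt (2 * (nu + 3))).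
  assert (Hx0 : 0 < x0) by (apply sqrt_lt_R0; lra).
  pose proof (E_neg_at_threshold nu Hnu) as HEx0; fold x0 in HEx0.
  split; [|split].
  - intros Hsmall; apply (dI_log_concave nu Hnu dI HdI); [red; intros; lra | auto |].
    intros x Hx; apply E_neg_small_nu; assumption.
  - apply (dI_log_concave nu Hnu dI HdI); [red; intros; lra | intros; lra |].
    intros x Hx; destruct (Rle_or_lt nu (-1 / 2)) as [Hsmall | Hbig]; [apply E_neg_small_nu; lra|].
    pose proof (E_increasing nu Hnu x x0 Hbig ltac:(lra) ltac:(lra)); lra.
  - intros Hbig.
    destruct (E_pos_somewhere nu Hnu Hbig) as [X [HX HEX]].
    assert (HxX : x0 < X).
    { apply Rnot_le_lt; intros [Hlt | ->]; [|lra].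
      pose proof (E_increasing nu Hnu X x0 Hbig HX Hlt); lra. }
    destruct (IVT (E nu) x0 X (E_continuous nu Hnu) HxX HEx0 HEX) as [z [Hz Ez]].
    assert (Hxz : x0 < z) by (destruct Hz as [[Hlt | <-] _]; lra).
    exists z; split; [exact Hxz | split].
    + apply (dI_log_concave nu Hnu dI HdI); [red; intros; lra | intros; lra |].
      intros x Hx; pose proof (E_increasing nu Hnu x z Hbig ltac:(lra) ltac:(lra)); lra.
    + apply (dI_log_convex nu Hnu dI HdI); [red; intros; lra | intros; lra |].
      intros x Hx; pose proof (E_increasing nu Hnu z x Hbig ltac:(lra) ltac:(lra)); lra.
Qed.
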